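(* Let $K\subset\mathbb{R}^n$ and $C\subset\mathbb{R}^m$ be nonempty, convex, closed and bounded sets, and let $f,h:\mathbb{R}^n\times\mathbb{R}^m\to\mathbb{R}$ be continuous functions such that, for every $y\in K$, $f(y,\cdot)$ and $h(y,\cdot)$ are convex, and such that $f$ takes only positive values. Fix $y\in K$. Let $(\varepsilon_k)$ be a sequence of positive numbers with $\varepsilon_k\to0$, and let $x_k\in\mathcal{S}_{\varepsilon_k}(y)$ for every $k$. If $x_k\to\bar x$, then $\bar x\in\widetilde{\mathcal{S}}(y)$.
   Context: $f^2=(f)^2$. $\mathcal{S}(y)=\operatorname{argmin}\{h(y,z)\mid z\in C\}$; for $\varepsilon>0$, $\mathcal{S}_\varepsilon(y)=\operatorname{argmin}\{h(y,z)+\varepsilon f^2(y,z)\mid z\in C\}$; $\widetilde{\mathcal{S}}(y)=\operatorname{argmin}\{f^2(y,z)\mid z\in\mathcal{S}(y)\}$. *)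

From HB Require Import structures.
From mathcomp Require Import all_boot all_order all_algebra.
From mathcomp Require Import all_classical all_reals all_analysis.
Set Implicit Arguments. Unset Strict Implicit. Unset Printing Implicit Defensive.
Import Order.TTheory GRing.Theory Num.Theory.
Import numFieldNormedType.Exports.
Local Open Scope classical_set_scope.
Local Open Scope ring_scope.

Section Defs.
Variable R : realType.

Definition convex_set_rV (p : nat) (A : set 'rV[R]_p) : Prop :=
  forall x z (t : R), A x -> A z -> 0 <= t <= 1 -> A (t *: x + (1 - t) *: z).

Definition convex_fun_rV (p : nat) (g : 'rV[R]_p -> R) : Prop :=
  forall x z (t : R), 0 <= t <= 1 ->
    g (t *: x + (1 - t) *: z) <= t * g x + (1 - t) * g z.

Definition argmin_set (p : nat) (phi : 'rV[R]_p -> R) (A : set 'rV[R]_p)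
  : set 'rV[R]_p := [set z | A z /\ forall w, A w -> phi z <= phi w].

Variables (n m : nat) (f h : 'rV[R]_n -> 'rV[R]_m -> R) (C : set 'rV[R]_m).

Definition Ssol (y : 'rV[R]_n) : set 'rV[R]_m := argmin_set (h y) C.

Definition Seps (eps : R) (y : 'rV[R]_n) : set 'rV[R]_m :=
  argmin_set (fun z => h y z + eps * (f y z) ^+ 2) C.

Definition Stilde (y : 'rV[R]_n) : set 'rV[R]_m :=
  argmin_set (fun z => (f y z) ^+ 2) (Ssol y).

End Defs.

(** The penalized minimizers [x_k] satisfy
    [h(y,x_k) + e_k f²(y,x_k) <= h(y,w) + e_k f²(y,w)] for every [w] in [C];
    letting [k -> oo] shows that the limit minimizes [h(y,.)] on [C]. When [w]
    already minimizes [h(y,.)], the [h]-terms can be cancelled and dividing by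
    [e_k > 0] gives [f²(y,x_k) <= f²(y,w)], which also passes to the limit. *)
From HB Require Import structures.
From mathcomp Require Import all_boot all_order all_algebra.
From mathcomp Require Import all_classical all_reals all_analysis.
Import Order.TTheory GRing.Theory Num.Theory.
Import numFieldNormedType.Exports.
Local Open Scope classical_set_scope.
Local Open Scope ring_scope.

Lemma continuous_section {X Y Z : topologicalType} {g : X -> Y -> Z} :
  continuous (fun q : X * Y => g q.1 q.2) -> forall x, continuous (g x).
Proof.
move=> gc x z.
have pair_cont : {for z, continuous (fun w : Y => (x, w))}.
  by apply: cvg_pair; [exact: cvg_cst | exact: cvg_id].
exact: continuous_comp pair_cont (gc (x, z)).
Qed.

Section Penalty.
Variables (R : realType) (p : nat) (phi psi : 'rV[R]_p -> R) (A : set 'rV[R]_p).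

Lemma argmin_penalty_le (e : R) z w :
  0 < e -> argmin_set (fun u => phi u + e * psi u) A z ->
  argmin_set phi A w -> psi z <= psi w.
Proof.
move=> e_gt0 [Az z_min] [Aw w_min].
rewrite -(ler_pM2l e_gt0) -(lerD2l (phi z)).
apply: le_trans (z_min w Aw) _.
by rewrite lerD2r w_min.
Qed.

Hypotheses (A_closed : closed A) (phi_cont : continuous phi)
  (psi_cont : continuous psi).
Variables (eps : nat -> R) (x : nat -> 'rV[R]_p) (xbar : 'rV[R]_p).
Hypotheses (eps_gt0 : forall k, 0 < eps k) (eps_cvg : eps @ \oo --> 0)
  (x_min : forall k, argmin_set (fun u => phi u + eps k * psi u) A (x k))
  (x_cvg : x @ \oo --> xbar).

Lemma penalized_cvg {u : nat -> 'rV[R]_p} {a} : u @ \oo --> a ->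
  (fun k => phi (u k) + eps k * psi (u k)) @ \oo --> phi a.
Proof.
move=> u_cvg; rewrite -[phi a]addr0 -(mul0r (psi a)).
apply: cvgD; first exact: (continuous_cvg _ (phi_cont a) u_cvg).
by apply: cvgM => //; exact: (continuous_cvg _ (psi_cont a) u_cvg).
Qed.

Lemma penalty_limit_mem : A xbar.
Proof.
apply: (closed_cvg _ A_closed _ _ x_cvg).
by near=> k; case: (x_min k).
Unshelve. all: by end_near.
Qed.

Lemma penalty_limit_argmin : argmin_set phi A xbar.
Proof.
split=> [|w Aw]; first exact: penalty_limit_mem.
apply: ler_cvg_to (penalized_cvg x_cvg) (penalized_cvg (cvg_cst w)) _.
by near=> k; case: (x_min k) => _; apply.
Unshelve. all: by end_near.
Qed.

Lemma penalty_limit_lexmin : argmin_set psi (argmin_set phi A) xbar.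
Proof.
split=> [|w w_min]; first exact: penalty_limit_argmin.
apply: ler_cvg_to (continuous_cvg _ (psi_cont xbar) x_cvg) (cvg_cst (psi w)) _.
by near=> k; apply: argmin_penalty_le (eps_gt0 k) (x_min k) w_min.
Unshelve. all: by end_near.
Qed.

End Penalty.

Theorem lemma3p2 (R : realType) (n m : nat)
  (K : set 'rV[R]_n) (C : set 'rV[R]_m)
  (f h : 'rV[R]_n -> 'rV[R]_m -> R) :
  K !=set0 -> convex_set_rV K -> closed K -> bounded_set K ->
  C !=set0 -> convex_set_rV C -> closed C -> bounded_set C ->
  continuous (fun p : 'rV[R]_n * 'rV[R]_m => f p.1 p.2) ->
  continuous (fun p : 'rV[R]_n * 'rV[R]_m => h p.1 p.2) ->
  (forall y, K y -> convex_fun_rV (f y)) ->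
  (forall y, K y -> convex_fun_rV (h y)) ->
  (forall y z, 0 < f y z) ->
  forall (y : 'rV[R]_n), K y ->
  forall (eps : nat -> R) (x : nat -> 'rV[R]_m) (xbar : 'rV[R]_m),
    (forall k, 0 < eps k) ->
    eps @ \oo --> (0 : R) ->
    (forall k, Seps f h C (eps k) y (x k)) ->
    x @ \oo --> xbar ->
    Stilde f h C y xbar.
Proof.
move=> _ _ _ _ _ _ C_closed _ f_cont h_cont _ _ _ y _ eps x xbar.
have f2_cont : continuous (fun z => f y z ^+ 2).
  move=> z; have fy_cont := continuous_section f_cont y z.
  exact: (continuousM fy_cont fy_cont).
exact: (@penalty_limit_lexmin R m (h y) (fun z => f y z ^+ 2) C C_closed
  (continuous_section h_cont y) f2_cont eps x xbar).
Qed.
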